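(* Let $k\ge1$, $t\ge 3$, and let $S_{t-1}$ be a set of representatives of all equivalence classes of binary linear $(t-1)$-CIS $[(t-1)k,k]$ codes, each given by a generator matrix $G_C$. Let $R$ be a set of representatives of the $\sim_1$-equivalence classes of $GL(k,2)$. Let $\overline{S_t}$ be the set of codes generated by the matrices $(G_C\mid B)$ with $C\in S_{t-1}$ and $B\in R$. Then every code in $\overline{S_t}$ is a $t$-CIS $[tk,k]$ code, and every $t$-CIS $[tk,k]$ code is equivalent to some code in $\overline{S_t}$; hence, removing equivalent codes from $\overline{S_t}$ and keeping one representative of each equivalence class yields a set $S_t$ of representatives of all inequivalent $t$-CIS codes of dimension $k$.
   Context: A binary linear $[tk,k]$ code is $t$-CIS if its coordinate set can be partitioned into $t$ pairwise disjoint information sets, an information set being a set of $k$ coordinates whose columns in a generator matrix are linearly independent. Two codes are equivalent if one is obtained from the other by a permutation of coordinates. For $A,B\in GL(k,2)$, $A\sim_1B$ iff $A=BP$ for some $k\times k$ permutation matrix $P$. *)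

From HB Require Import structures.
From mathcomp Require Import all_boot all_order all_algebra all_fingroup.
Set Implicit Arguments. Unset Strict Implicit. Unset Printing Implicit Defensive.
Import GRing.Theory.
Local Open Scope ring_scope.

(* A binary linear [n,k] code is given by a generator matrix G : 'M_(k,n) of
   rank k; the code is the row space of G. *)
Definition gen_mx (k n : nat) (G : 'M['F_2]_(k, n)) : bool := \rank G == k.

Definition cols_of (k n : nat) (G : 'M['F_2]_(k, n)) (I : {set 'I_n})
  : 'M['F_2]_(#|I|, k) := \matrix_(j < #|I|, i < k) G i (enum_val j).

Definition info_set (k n : nat) (G : 'M['F_2]_(k, n)) (I : {set 'I_n}) : Prop :=
  #|I| = k /\ row_free (cols_of G I).

(* t-CIS: the coordinate set is partitioned into t pairwise disjoint
   information sets (blocks = fibres of a labelling f of coordinates by 'I_t). *)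
Definition CIS (t k n : nat) (G : 'M['F_2]_(k, n)) : Prop :=
  exists f : {ffun 'I_n -> 'I_t}, forall j : 'I_t, info_set G [set x | f x == j].

Definition code_equiv (k n : nat) (G1 G2 : 'M['F_2]_(k, n)) : Prop :=
  exists s : 'S_n, (col_perm s G1 == G2)%MS.

Definition sim1 (k : nat) (A B : 'M['F_2]_k) : Prop :=
  exists s : 'S_k, A = B *m perm_mx s.

Definition CIS_reps (t k n : nat) (S : seq 'M['F_2]_(k, n)) : Prop :=
  (forall G, G \in S -> gen_mx G /\ CIS t G) /\
  (forall G, gen_mx G -> CIS t G -> exists2 H, H \in S & code_equiv G H) /\
  (forall G1 G2, G1 \in S -> G2 \in S -> code_equiv G1 G2 -> G1 = G2).

Definition GL_reps (k : nat) (R : seq 'M['F_2]_k) : Prop :=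
  (forall B, B \in R -> B \in unitmx) /\
  (forall A, A \in unitmx -> exists2 B, B \in R & sim1 A B) /\
  (forall B1 B2, B1 \in R -> B2 \in R -> sim1 B1 B2 -> B1 = B2).

(* After permuting coordinates so that one block of the partition comes last,
   a t-CIS code is generated by (G0 | B0) with G0 a (t-1)-CIS generator matrix
   and B0 invertible; conversely appending an invertible block to a (t-1)-CIS
   code gives a t-CIS code.  If G = M G0 P is the chosen representative of G0
   (M invertible, P a permutation matrix), then (G0 | B0) is equivalent to
   (G | M B0 P') for every permutation P', and P' can be chosen so that M B0 P'
   is the representative of the ~1-class of M B0. *)

From mathcomp Require Import all_boot all_order all_algebra all_fingroup.
Set Implicit Arguments. Unset Strict Implicit. Unset Printing Implicit Defensive.
Import GRing.Theory.
Local Open Scope ring_scope.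

Section FreeColumns.
Variable F : fieldType.

Definition free_cols (k n : nat) (A : 'M[F]_(k, n)) (I : {set 'I_n}) : Prop :=
  forall c : 'I_n -> F, (forall i, \sum_(x in I) c x * A i x = 0) ->
  {in I, forall x, c x = 0}.

Lemma row_free_trP (k n : nat) (A : 'M[F]_(k, n)) :
  row_free A^T <-> free_cols A setT.
Proof.
split=> [freeA c c0 x _ | freeA].
  suff /(row_free_inj freeA)/rowP/(_ x) : (\row_x c x) *m A^T = 0 *m A^T.
    by rewrite !mxE.
  apply/rowP => i; rewrite mul0mx !mxE -[RHS](c0 i).
  by apply: eq_big => y; rewrite ?inE // => _; rewrite !mxE.
apply: inj_row_free => v v0; apply/rowP => x; rewrite mxE.
apply: (freeA (v 0)) => // i.
have /rowP/(_ i) := v0; rewrite !mxE => vA0; rewrite -[RHS]vA0.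
by apply: eq_big => y; rewrite ?inE // => _; rewrite !mxE.
Qed.

Lemma free_cols_colsub (k n p : nat) (A : 'M[F]_(k, n)) (h : 'I_p -> 'I_n)
    (I : {set 'I_p}) :
  injective h -> free_cols (colsub h A) I <-> free_cols A (h @: I).
Proof.
move=> h_inj.
have sum_h (G : 'I_n -> F) : \sum_(x in h @: I) G x = \sum_(y in I) G (h y).
  by rewrite big_imset //= => a b _ _ /h_inj.
split=> [freeI c c0 _ /imsetP[x xI ->] | freehI c c0 x xI].
  apply: (freeI (c \o h)) xI => i; apply: (etrans _ (c0 i)); rewrite sum_h.
  by apply: eq_bigr => y _; rewrite mxE.
pose c' z := if [pick y | h y == z] is Some y then c y else 0.
have c'h y : c' (h y) = c y.
  by rewrite /c'; case: pickP => [y' /eqP/h_inj -> | /(_ y)]; rewrite ?eqxx.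
rewrite -c'h; apply: freehI; last exact: imset_f.
move=> i; rewrite sum_h; apply: (etrans _ (c0 i)).
by apply: eq_bigr => y _; rewrite c'h mxE.
Qed.

Lemma free_colsT_unitmx (k : nat) (B : 'M[F]_k) : free_cols B setT <-> B \in unitmx.
Proof.
by apply: iff_trans (iff_sym (row_free_trP B)) _; rewrite row_free_unit unitmx_tr.
Qed.

Lemma mxrank_colsub (k n p : nat) (A : 'M[F]_(k, n)) (h : 'I_p -> 'I_n) :
  (\rank (colsub h A) <= \rank A)%N.
Proof. by rewrite -[A in colsub h A]mulmx1 -mulmx_colsub mxrankM_maxl. Qed.

End FreeColumns.

Lemma cols_ofE k n (G : 'M['F_2]_(k, n)) (I : {set 'I_n}) :
  cols_of G I = (colsub enum_val G)^T.
Proof. by apply/matrixP => i j; rewrite !mxE. Qed.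

Lemma info_setP k n (G : 'M['F_2]_(k, n)) (I : {set 'I_n}) :
  info_set G I <-> #|I| = k /\ free_cols G I.
Proof.
have enumI : enum_val @: [set: 'I_#|I|] = I.
  apply/setP => x; apply/imsetP/idP => [[y _ ->] | xI]; first exact: enum_valP.
  by exists (enum_rank_in xI x); rewrite ?enum_rankK_in.
have freeI : row_free (cols_of G I) <-> free_cols G I.
  have := free_cols_colsub G setT (@enum_val_inj _ (mem I)); rewrite enumI.
  by rewrite cols_ofE; apply: iff_trans (row_free_trP _).
by split=> -[cardI /freeI]; split.
Qed.

Lemma info_set_colsub k n p (G : 'M['F_2]_(k, n)) (h : 'I_p -> 'I_n)
    (I : {set 'I_p}) :
  injective h -> info_set (colsub h G) I <-> info_set G (h @: I).
Proof.
move=> h_inj; have freeE := free_cols_colsub G I h_inj.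
split=> /info_setP[cardI freeI]; apply/info_setP.
  by rewrite card_imset //; split=> //; apply/freeE.
by rewrite -(card_imset I h_inj); split=> //; apply/freeE.
Qed.

Lemma info_set_rank k n (G : 'M['F_2]_(k, n)) (I : {set 'I_n}) :
  info_set G I -> \rank G = k.
Proof.
case=> cardI /eqP; rewrite cols_ofE mxrank_tr => rk_sub.
apply/eqP; rewrite eqn_leq rank_leq_row -{1}cardI -{1}rk_sub.
exact: mxrank_colsub.
Qed.

Lemma CIS_gen_mx t k n (G : 'M['F_2]_(k, n)) :
  (0 < t)%N -> CIS t G -> gen_mx G.
Proof. by case: t => // t _ [f /(_ ord0) /info_set_rank rkG]; apply/eqP. Qed.

Lemma info_setT_unitmx k (B : 'M['F_2]_k) : info_set B setT <-> B \in unitmx.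
Proof.
split=> [/info_setP[_ /free_colsT_unitmx] // | /free_colsT_unitmx freeB].
by apply/info_setP; rewrite cardsT card_ord.
Qed.

Lemma CIS_row_mx_unitmx t k n (G : 'M['F_2]_(k, n)) (B : 'M['F_2]_k) :
  CIS t G -> B \in unitmx -> CIS t.+1 (row_mx G B).
Proof.
case=> f infoG unitB.
pose F : {ffun 'I_(n + k) -> 'I_t.+1} :=
  [ffun z => if split z is inl x then lift ord_max (f x) else ord_max].
exists F => j; case: (unliftP ord_max j) => [j' | ] ->.
  have -> : [set z | F z == lift ord_max j'] = lshift k @: [set x | f x == j'].
    apply/setP => z; rewrite inE ffunE; case: split_ordP => y ->.
      by rewrite mem_imset ?inE ?(inj_eq lift_inj) //; apply: lshift_inj.
    rewrite (negbTE (neq_lift _ _)); apply/esym/imsetP => -[x _ /eqP].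
    by rewrite eq_rlshift.
  apply/info_set_colsub; first exact: lshift_inj.
  by rewrite -lsubmxEsub row_mxKl.
have -> : [set z | F z == ord_max] = @rshift n k @: [set: 'I_k].
  apply/setP => z; rewrite inE ffunE; case: split_ordP => y ->.
    rewrite eq_sym (negbTE (neq_lift _ _)); apply/esym/imsetP => -[x _ /eqP].
    by rewrite eq_lrshift.
  by rewrite eqxx imset_f ?inE.
apply/info_set_colsub; first exact: rshift_inj.
by rewrite -rsubmxEsub row_mxKr; apply/info_setT_unitmx.
Qed.

Lemma perm_onto_last n k (I : {set 'I_(n + k)}) :
  #|I| = k -> exists s : 'S_(n + k), forall z, (s z \in I) = (n <= z)%N.
Proof.
move=> cardI; have cardCI : #|~: I| = n.
  by apply/eqP; rewrite -(eqn_add2l k) -{1}cardI cardsC card_ord addnC.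
pose e := enum (~: I) ++ enum I.
have size_e : size e = (n + k)%N by rewrite size_cat -!cardE cardCI cardI.
have uniq_e : uniq e.
  rewrite cat_uniq !enum_uniq andbT /=; apply/hasPn => x.
  by rewrite !mem_enum in_setC negbK.
have h_inj : injective (fun z => nth z e z).
  move=> z1 z2; rewrite [nth z2 _ _](set_nth_default z1) ?size_e //.
  by move/eqP; rewrite nth_uniq ?size_e // => /eqP/val_inj.
exists (perm h_inj) => z; rewrite permE nth_cat -cardE cardCI.
case: ltnP => [z_lt_n | n_le_z].
  have : nth z (enum (~: I)) z \in enum (~: I) by rewrite mem_nth // -cardE cardCI.
  by rewrite mem_enum in_setC => /negbTE.
by rewrite -mem_enum mem_nth // -cardE cardI ltn_subLR.
Qed.

Lemma CIS_col_perm_split t k n (H : 'M['F_2]_(k, n + k)) :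
  (0 < t)%N -> CIS t.+1 H ->
  exists s : 'S_(n + k),
    CIS t (lsubmx (col_perm s H)) /\ rsubmx (col_perm s H) \in unitmx.
Proof.
move=> t_gt0 [f infoH]; set I := [set z | f z == ord_max].
have [s sI] := perm_onto_last (infoH ord_max).1.
have sL x : s (lshift k x) \notin I by rewrite sI /= -ltnNge.
exists s; rewrite col_permEsub lsubmxEsub rsubmxEsub -!colsub_comp; split.
  pose g :=
    [ffun x => odflt (Ordinal t_gt0) (unlift ord_max (f (s (lshift k x))))].
  exists g => j; apply/info_set_colsub; first by move=> x y /perm_inj/lshift_inj.
  suff -> : (s \o lshift k) @: [set x | g x == j] = [set z | f z == lift ord_max j].
    exact: infoH.
  apply/setP => z; apply/imsetP/idP => [[x] | ].
    rewrite inE ffunE => /eqP gx ->; rewrite inE /=; move: gx (sL x).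
    by rewrite inE; case: unliftP => [j' -> /= -> | ->]; rewrite ?eqxx.
  rewrite inE => /eqP fz; case: (split_ordP ((s^-1)%g z)) => w Ew.
    exists w; last by rewrite /= -Ew permKV.
    by rewrite inE ffunE -Ew permKV fz liftK.
  have := sI (rshift n w); rewrite /= leq_addr -Ew permKV inE fz.
  by rewrite eq_sym (negbTE (neq_lift _ _)).
apply/info_setT_unitmx/info_set_colsub; first by move=> x y /perm_inj/rshift_inj.
suff -> : (s \o @rshift n k) @: [set: 'I_k] = I by apply: infoH.
apply/setP => z; apply/imsetP/idP => [[y _ ->] | zI].
  by rewrite /= sI /= leq_addr.
case: (split_ordP ((s^-1)%g z)) => w Ew.
  by have := sI (lshift k w); rewrite /= leqNgt ltn_ord -Ew permKV zI.
by exists w; rewrite // /= -Ew permKV.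
Qed.

Lemma eqmx_row_free_unitmx (F : fieldType) m n (A B : 'M[F]_(m, n)) :
  row_free A -> (B == A)%MS -> exists2 M : 'M_m, M \in unitmx & B = M *m A.
Proof.
move=> freeA eqBA; have /andP[BA _] := eqBA.
exists (B *m pinvmx A); last by rewrite mulmxKpV.
rewrite -row_free_unit /row_free -(mxrankMfree _ freeA) mulmxKpV //.
by rewrite (eqmx_rank eqBA).
Qed.

Lemma col_perm_row_mx (R : Type) m n1 n2 (A : 'M[R]_(m, n1)) (B : 'M[R]_(m, n2))
    (s : 'S_n1) (p : 'S_n2) :
  exists q : 'S_(n1 + n2),
    col_perm q (row_mx A B) = row_mx (col_perm s A) (col_perm p B).
Proof.
pose h (z : 'I_(n1 + n2)) :=
  match split z with inl x => lshift n2 (s x) | inr y => rshift n1 (p y) end.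
have h_inj : injective h.
  move=> z1 z2; rewrite /h.
  by case: split_ordP => x1 ->; case: split_ordP => x2 -> /eqP;
    rewrite ?eq_shift // => /eqP/perm_inj ->.
exists (perm h_inj); apply/matrixP => i z; rewrite mxE permE /h.
by case: split_ordP => w ->; rewrite ?row_mxEl ?row_mxEr mxE.
Qed.

Section CodeEquivalence.
Variables k n : nat.
Implicit Types G : 'M['F_2]_(k, n).

Lemma code_equiv_refl G : code_equiv G G.
Proof. by exists 1%g; rewrite col_perm1; apply/eqmxP. Qed.

Lemma code_equiv_sym G1 G2 : code_equiv G1 G2 -> code_equiv G2 G1.
Proof.
case=> s /eqmxP; rewrite col_permE => /(eqmxMr (perm_mx s)).
rewrite -mulmxA -perm_mxM mulVg perm_mx1 mulmx1 => eqG.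
by exists (s^-1)%g; rewrite col_permE invgK; apply/eqmxP/eqmx_sym.
Qed.

Lemma code_equiv_trans G1 G2 G3 :
  code_equiv G1 G2 -> code_equiv G2 G3 -> code_equiv G1 G3.
Proof.
case=> s1 /eqmxP eq12 [s2 /eqmxP eq23]; exists (s2 * s1)%g; apply/eqmxP.
rewrite col_permM; apply: eqmx_trans _ eq23.
by rewrite col_permE [col_perm s2 G2]col_permE; apply: eqmxMr.
Qed.

End CodeEquivalence.

Definition code_equivb k n (G1 G2 : 'M['F_2]_(k, n)) : bool :=
  [exists s : 'S_n, (col_perm s G1 == G2)%MS].

Lemma code_equivP k n (G1 G2 : 'M['F_2]_(k, n)) :
  reflect (code_equiv G1 G2) (code_equivb G1 G2).
Proof. exact: existsPP (fun s => idP). Qed.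

Lemma CIS_row_mx_cover t k n (S : seq 'M['F_2]_(k, n)) (R : seq 'M['F_2]_k)
    (H : 'M['F_2]_(k, n + k)) :
  (0 < t)%N -> CIS_reps t S -> GL_reps R -> CIS t.+1 H ->
  exists G B, [/\ G \in S, B \in R & code_equiv H (row_mx G B)].
Proof.
move=> t_gt0 [_ [coverS _]] [_ [coverR _]] /(CIS_col_perm_split t_gt0).
case=> s []; set G0 := lsubmx _; set B0 := rsubmx _ => cisG0 unitB0.
have gen_G0 : gen_mx G0 := CIS_gen_mx t_gt0 cisG0.
have [G GS [s' /eqmxP/eqmx_sym/eqmxP G_G0]] := coverS G0 gen_G0 cisG0.
have [M unitM defG] : exists2 M : 'M_k, M \in unitmx & G = M *m col_perm s' G0.
  apply: eqmx_row_free_unitmx G_G0.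
  by rewrite col_permE /row_free mxrankMfree ?row_free_unit ?unitmx_perm.
have [B BR [p MB0_Bp]] : exists2 B, B \in R & sim1 (M *m B0) B.
  by apply: coverR; rewrite unitmx_mul unitM.
have defB : B = M *m col_perm p B0.
  by rewrite col_permE mulmxA MB0_Bp -mulmxA -perm_mxM mulgV perm_mx1 mulmx1.
have [q defq] := col_perm_row_mx G0 B0 s' p.
exists G, B; split=> //; exists (q * s)%g.
rewrite col_permM -[col_perm s H]hsubmxK -/G0 -/B0 defq defG defB -mul_mx_row.
by apply/eqmxP/eqmx_sym/eqmxMfull; rewrite row_full_unit.
Qed.

Lemma CIS_reps_subseq t k n (Sb : seq 'M['F_2]_(k, n)) :
  (forall G, G \in Sb -> gen_mx G /\ CIS t G) ->
  (forall G, gen_mx G -> CIS t G -> exists2 H, H \in Sb & code_equiv G H) ->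
  exists St, CIS_reps t St /\ {subset St <= Sb}.
Proof.
move=> cisSb coverSb.
pose canon G := nth 0 Sb (find (code_equivb G) Sb).
have canonP G : G \in Sb -> canon G \in Sb /\ code_equiv G (canon G).
  move=> GSb; have hasG : has (code_equivb G) Sb.
    by apply/hasP; exists G => //; apply/code_equivP/code_equiv_refl.
  by split; [apply: mem_nth; rewrite -has_find | apply/code_equivP/nth_find].
have canonE G1 G2 : code_equiv G1 G2 -> canon G1 = canon G2.
  move=> eqG; congr nth; apply: eq_find => G; apply/code_equivP/code_equivP.
    exact: code_equiv_trans (code_equiv_sym eqG).
  exact: code_equiv_trans eqG.
have canon_Sb G : G \in map canon Sb -> G \in Sb.
  by case/mapP=> G' /canonP[? _] ->.
exists (map canon Sb); split=> //; split; [|split].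
- by move=> G /canon_Sb /cisSb.
- move=> G genG cisG; have [H HSb eqGH] := coverSb G genG cisG.
  exists (canon H); first exact: map_f.
  exact: code_equiv_trans eqGH (canonP H HSb).2.
- move=> _ _ /mapP[G1 G1Sb ->] /mapP[G2 G2Sb ->] eqG; apply: canonE.
  apply: code_equiv_trans (canonP G1 G1Sb).2 _.
  exact: code_equiv_trans eqG (code_equiv_sym (canonP G2 G2Sb).2).
Qed.

Theorem proposition8 (k t : nat) (hk : (1 <= k)%N) (ht : (3 <= t)%N)
  (S : seq 'M['F_2]_(k, (t - 1) * k)) (R : seq 'M['F_2]_k) :
  CIS_reps (t - 1) S -> GL_reps R ->
  (forall G B, G \in S -> B \in R ->
     gen_mx (row_mx G B) /\ CIS t (row_mx G B)) /\
  (forall H : 'M['F_2]_(k, (t - 1) * k + k), gen_mx H -> CIS t H ->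
     exists G B, [/\ G \in S, B \in R & code_equiv H (row_mx G B)]) /\
  (exists St : seq 'M['F_2]_(k, (t - 1) * k + k),
     CIS_reps t St /\
     forall H, H \in St -> exists G B, [/\ G \in S, B \in R & H = row_mx G B]).
Proof.
case: t ht S => [|m] // ht; rewrite subSS subn0 => S repsS repsR.
have m_gt0 : (0 < m)%N by move: ht; rewrite ltnS; apply: leq_trans.
have extend G B : G \in S -> B \in R ->
    gen_mx (row_mx G B) /\ CIS m.+1 (row_mx G B).
  move=> GS BR; have cis := CIS_row_mx_unitmx (repsS.1 G GS).2 (repsR.1 B BR).
  by split=> //; apply: CIS_gen_mx cis.
have cover H : CIS m.+1 H ->
    exists G B, [/\ G \in S, B \in R & code_equiv H (row_mx G B)].
  exact: CIS_row_mx_cover m_gt0 repsS repsR.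
pose Sb := [seq row_mx G B | G <- S, B <- R].
have [St [repsSt StSb]] : exists St, CIS_reps m.+1 St /\ {subset St <= Sb}.
  apply: CIS_reps_subseq => [_ /allpairsP[[G B] [/= GS BR ->]] | H _ /cover].
    exact: extend.
  by case=> G [B [GS BR eqH]]; exists (row_mx G B) => //; apply: allpairs_f.
split=> //; split=> [H _ /cover // |]; exists St; split=> // H /StSb.
by case/allpairsP=> -[G B] [/= GS BR ->]; exists G, B.
Qed.
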